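(* Let $n\ge 2$ be odd, $\pi=A_1\cdots A_n\in\mathbb{S}_{2n}$ with $A_i=(2i-1\ \ 2i)$, and $\mathcal{O}_\pi$ its conjugacy class. If $\rho=\chi_{(n)}\otimes\epsilon$ or $\rho=\chi_{(n)}\otimes\mathrm{sgn}$, then the braiding of $M(\mathcal{O}_\pi,\rho)$ is negative.
   Context: Permutations are composed right to left. For a finite group $G$, a conjugacy class $\mathcal{C}$, a fixed $s\in\mathcal{C}$ with centralizer $G^s$ and an irreducible representation $(\rho,V)$ of $G^s$, $M(\mathcal{C},\rho)$ is the irreducible Yetter–Drinfeld module over $\mathbb{C}G$: enumerate $\mathcal{C}=\{t_1=s,\dots,t_M\}$, choose $g_i\in G$ with $g_isg_i^{-1}=t_i$; $M(\mathcal{C},\rho)=\bigoplus_i g_i\otimes V$ with grading $\deg(g_i\otimes v)=t_i$, action $g\cdot(g_i\otimes v)=g_j\otimes\rho(\gamma)v$ where $gg_i=g_j\gamma$, $\gamma\in G^s$, and braiding $c((g_i\otimes v)\otimes(g_j\otimes w))=(g_h\otimes\rho(\gamma)w)\otimes(g_i\otimes v)$ where $t_ig_j=g_h\gamma$, $\gamma\in G^s$. When $\rho$ is one-dimensional, the braiding is called negative if for all $i,j$ with $t_it_j=t_jt_i$, setting $q_{ij}:=\rho(g_j^{-1}t_ig_j)$, one has $q_{ii}=-1$ and $q_{ij}q_{ji}=1$. The centralizer is $\mathbb{S}_{2n}^\pi=\langle A_1,\dots,A_n\rangle\rtimes\langle B_1,\dots,B_{n-1}\rangle\cong\mathbb{Z}_2^n\rtimes\mathbb{S}_n$,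 where $B_j=(2j-1\ \ 2j+1)(2j\ \ 2j+2)$ corresponds to $(j\ j+1)\in\mathbb{S}_n$. $\chi_{(n)}\otimes\epsilon$ (resp. $\chi_{(n)}\otimes\mathrm{sgn}$) is the one-dimensional representation with $A_i\mapsto-1$ for all $i$ and $B_j\mapsto1$ (resp. $B_j\mapsto-1$) for all $j$. *)

From HB Require Import structures.
From mathcomp Require Import all_boot all_order all_algebra all_fingroup all_field.
From mathcomp Require Import zify.
Set Implicit Arguments. Unset Strict Implicit. Unset Printing Implicit Defensive.
Import GRing.Theory Num.Theory.
Local Open Scope group_scope.

(* Points 1..2n of the paper are the ordinals 0..2n-1 of 'I_(2*n):
   paper point p  <->  ordinal p-1. *)

Lemma ordA0_lt n (k : 'I_n) : 2 * k < 2 * n. Proof. have := ltn_ord k; lia. Qed.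
Lemma ordA1_lt n (k : 'I_n) : 2 * k + 1 < 2 * n. Proof. have := ltn_ord k; lia. Qed.

(* A_(k+1) = (2k+1  2k+2) in paper numbering, for k < n *)
Definition Aperm n (k : 'I_n) : 'S_(2 * n) :=
  tperm (Ordinal (ordA0_lt k)) (Ordinal (ordA1_lt k)).

Definition piperm n : 'S_(2 * n) := \prod_(k < n) Aperm k.

Lemma ordB0_lt n (k : 'I_n.-1) : 2 * k < 2 * n. Proof. have := ltn_ord k; lia. Qed.
Lemma ordB1_lt n (k : 'I_n.-1) : 2 * k + 1 < 2 * n. Proof. have := ltn_ord k; lia. Qed.
Lemma ordB2_lt n (k : 'I_n.-1) : 2 * k + 2 < 2 * n. Proof. have := ltn_ord k; lia. Qed.
Lemma ordB3_lt n (k : 'I_n.-1) : 2 * k + 3 < 2 * n. Proof. have := ltn_ord k; lia. Qed.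

(* B_(k+1) = (2k+1  2k+3)(2k+2  2k+4) in paper numbering, for k < n-1 *)
Definition Bperm n (k : 'I_n.-1) : 'S_(2 * n) :=
  tperm (Ordinal (ordB0_lt k)) (Ordinal (ordB2_lt k)) *
  tperm (Ordinal (ordB1_lt k)) (Ordinal (ordB3_lt k)).

(* One-dimensional representation of the subgroup H, as a function on gT
   (values outside H are irrelevant). *)
Definition one_dim_rep (gT : finGroupType) (H : {set gT}) (rho : gT -> algC) :=
  rho 1%g = 1%R /\ {in H &, forall x y, rho (x * y) = (rho x * rho y)%R}.

(* g is a choice of conjugating elements: for each t in the class of s,
   g t s (g t)^-1%g = t (paper's convention, i.e. mathcomp's s ^ g t = t,
   since mathcomp composes permutations left to right). *)
Definition conj_choice (gT : finGroupType) (s : gT) (g : gT -> gT) :=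
  forall t, t \in s ^: [set: gT] -> s ^ g t = t.

(* Negative braiding: q_{t u} := rho(g_u^{-1} t g_u) (paper product),
   which in mathcomp's left-to-right product is t ^ (g u)^-1%g. *)
Definition qcoef (gT : finGroupType) (rho : gT -> algC) (g : gT -> gT)
    (t u : gT) : algC := rho ((t ^ (g u)^-1)%g).

Definition negative_braiding (gT : finGroupType) (s : gT) (rho : gT -> algC)
    (g : gT -> gT) :=
  forall t u, t \in s ^: [set: gT] -> u \in s ^: [set: gT] -> commute t u ->
    qcoef rho g t t = (-1)%R /\
    (qcoef rho g t u * qcoef rho g u t)%R = 1%R.

From HB Require Import structures.
From mathcomp Require Import all_boot all_order all_algebra all_fingroup all_field.
From mathcomp Require Import zify.
Import GRing.Theory Num.Theory.
Local Open Scope group_scope.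

(* The diagonal coefficient q_tt is rho(pi) = rho(A_1) ... rho(A_n) = (-1)^n = -1.
   For commuting t, u in the class, x := g_u^-1 t g_u and y := g_t^-1 u g_t
   are fixed-point-free involutions commuting with pi. Two commuting
   fixed-point-free involutions are exchanged by a single conjugation, which
   produces w in the centralizer of pi with x ^ w = y. A one-dimensional
   representation is a class function on the centralizer and squares
   involutions to 1, so q_tu q_ut = rho(x) rho(y) = rho(x)^2 = 1. *)

Section OneDimRep.
Context {gT : finGroupType} {H : {group gT}} {rho : gT -> algC}.
Hypothesis rho_rep : one_dim_rep H rho.

Lemma one_dim_rep1 : rho 1 = 1%R.
Proof. by case: rho_rep. Qed.

Lemma one_dim_repM : {in H &, {morph rho : x y / x * y >-> (x * y)%R}}.
Proof. by case: rho_rep. Qed.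

Lemma one_dim_rep_prod {I : Type} (r : seq I) {f : I -> gT} :
  (forall i, f i \in H) -> rho (\prod_(i <- r) f i) = (\prod_(i <- r) rho (f i))%R.
Proof.
move=> fH; elim: r => [|i r IHr]; first by rewrite !big_nil one_dim_rep1.
by rewrite !big_cons one_dim_repM ?group_prod // IHr.
Qed.

Lemma one_dim_repJ {x w} : x \in H -> w \in H -> rho (x ^ w) = rho x.
Proof.
move=> xH wH; rewrite conjgE !one_dim_repM ?groupM ?groupV //.
by rewrite mulrCA -one_dim_repM ?groupV // mulVg one_dim_rep1 mulr1.
Qed.

Lemma one_dim_rep_invol {x} : x \in H -> x * x = 1 -> (rho x * rho x = 1)%R.
Proof. by move=> xH xx; rewrite -one_dim_repM // xx one_dim_rep1. Qed.

End OneDimRep.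

Section CommutingInvolutions.
Variables (T : finType) (P X : {perm T}).
Hypotheses (P_invol : P * P = 1) (X_invol : X * X = 1) (PX_comm : commute P X).
Hypotheses (P_fpf : forall a, P a != a) (X_fpf : forall a, X a != a).

Let PK a : P (P a) = a. Proof. by rewrite -permM P_invol perm1. Qed.
Let XK a : X (X a) = a. Proof. by rewrite -permM X_invol perm1. Qed.
Let PXC a : P (X a) = X (P a). Proof. by rewrite -!permM PX_comm. Qed.

Let key (a : T) : nat := enum_rank a.
Let Z a := P (X a).

(* An orbit of <P, X> is {a, Pa, Xa, Za} with Z = PX; it splits into the
   pairs {a, Za} and {Pa, Xa}, and [least_pair a] says that the pair of [a]
   holds the least element of the orbit.  The swap fixes that pair and
   applies Z to the other one. *)
Let least_pair a := minn (key a) (key (Z a)) < minn (key (P a)) (key (X a)).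
Let swapf a := if least_pair a then a else Z a.

Let PZ a : P (Z a) = X a. Proof. exact: PK. Qed.
Let XZ a : X (Z a) = P a. Proof. by rewrite /Z -PXC XK. Qed.
Let ZX a : Z (X a) = P a. Proof. by rewrite /Z XK. Qed.
Let ZP a : Z (P a) = X a. Proof. by rewrite /Z PXC PK. Qed.
Let ZK a : Z (Z a) = a. Proof. by rewrite {1}/Z XZ PK. Qed.

Let pairs_disjoint a :
  [/\ key a != key (P a), key a != key (X a),
      key (Z a) != key (P a) & key (Z a) != key (X a)].
Proof.
have key_eq b c : (key b == key c) = (b == c).
  by apply/eqP/eqP => [/val_inj/enum_rank_inj|->].
rewrite !key_eq !(eq_sym a) P_fpf X_fpf /Z (inj_eq perm_inj) P_fpf.
by split=> //; apply: contraNneq (X_fpf a) => /perm_inj ->.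
Qed.

Let least_pairZ a : least_pair (Z a) = least_pair a.
Proof. by rewrite /least_pair ZK PZ XZ minnC [minn (key (X a)) _]minnC. Qed.

Let least_pairX a : least_pair (X a) = ~~ least_pair a.
Proof.
rewrite /least_pair ZX XK -/(Z a).
by case: (pairs_disjoint a) => /eqP ? /eqP ? /eqP ? /eqP ?; apply/idP/idP; lia.
Qed.

Let least_pairP a : least_pair (P a) = ~~ least_pair a.
Proof.
rewrite /least_pair ZP PK -PXC -/(Z a).
by case: (pairs_disjoint a) => /eqP ? /eqP ? /eqP ? /eqP ?; apply/idP/idP; lia.
Qed.

Let swapfK : cancel swapf swapf.
Proof.
move=> a; rewrite /swapf; case la: (least_pair a); first by rewrite la.
by rewrite least_pairZ la ZK.
Qed.

Let swap := perm (can_inj swapfK).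

Let swap_conj (Q R : {perm T}) : (forall a, swap (Q a) = R (swap a)) -> Q ^ swap = R.
Proof. by move=> QR; apply/permP => b; rewrite -(permKV swap b) permJ QR. Qed.

Lemma commuting_fpf_involutions_swap : exists d : {perm T}, X ^ d = P /\ P ^ d = X.
Proof.
exists swap; split; apply: swap_conj => a; rewrite !permE /swapf.
- by rewrite least_pairX; case: (least_pair a); rewrite ?ZX ?PZ.
- by rewrite least_pairP; case: (least_pair a); rewrite ?ZP ?XZ.
Qed.

End CommutingInvolutions.

Section CommutingClassElements.
Variables (gT : finGroupType) (s : gT) (g : gT -> gT).
Hypothesis g_conj : conj_choice s g.

Lemma conj_choiceV {t} : t \in s ^: [set: gT] -> t ^ (g t)^-1 = s.
Proof. by move=> ht; rewrite -{1}(g_conj _ ht) conjgK. Qed.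

Lemma class_conjg {t} h : t \in s ^: [set: gT] -> t ^ h \in s ^: [set: gT].
Proof. by move=> ht; rewrite -(g_conj _ ht) -conjgM memJ_class ?inE. Qed.

Lemma class_invol {t} : s * s = 1 -> t \in s ^: [set: gT] -> t * t = 1.
Proof. by move=> ss ht; rewrite -(g_conj _ ht) -conjMg ss conj1g. Qed.

Lemma commuting_class_conjV_cent {t u} :
    u \in s ^: [set: gT] -> commute t u -> t ^ (g u)^-1 \in 'C[s].
Proof. by move=> hu ctu; rewrite -(conj_choiceV hu) cent1J memJ_conjg; apply/cent1P. Qed.

Hypothesis s_swap : forall {x}, x \in s ^: [set: gT] -> commute x s ->
  exists d, x ^ d = s /\ s ^ d = x.

Lemma commuting_class_conjV_conj {t u} :
    t \in s ^: [set: gT] -> u \in s ^: [set: gT] -> commute t u ->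
  exists2 w, w \in 'C[s] & (t ^ (g u)^-1) ^ w = u ^ (g t)^-1.
Proof.
move=> ht hu ctu; set x := t ^ (g u)^-1; set c := g u * (g t)^-1.
have xs : commute x s by apply/cent1P; exact: commuting_class_conjV_cent.
have [d [xd sd]] := s_swap (class_conjg _ ht) xs.
have xc : x ^ c = s by rewrite conjgM conjgKV conj_choiceV.
have sc : s ^ c = u ^ (g t)^-1 by rewrite conjgM (g_conj _ hu).
exists (d * c); last by rewrite conjgM xd sc.
by rewrite cent1C; apply/cent1P/commgP/conjg_fixP; rewrite conjgM sd xc.
Qed.

Lemma negative_braiding_of_swap (rho : gT -> algC) :
    s * s = 1 -> one_dim_rep 'C[s] rho -> rho s = (-1)%R ->
  negative_braiding s rho g.
Proof.
move=> ss rho_rep rho_s t u ht hu ctu; rewrite /qcoef conj_choiceV //; split=> //.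
have [w wC <-] := commuting_class_conjV_conj ht hu ctu.
have xC := commuting_class_conjV_cent hu ctu.
rewrite (one_dim_repJ rho_rep) //; apply: (one_dim_rep_invol rho_rep) => //.
exact/class_invol/class_conjg.
Qed.

End CommutingClassElements.

Definition mate (a : nat) : nat := if odd a then a.-1 else a.+1.

Lemma mateE a : mate a = (if a %% 2 == 1 then a - 1 else a + 1)%N.
Proof. by rewrite /mate modn2; case: (odd a); rewrite ?subn1 ?addn1. Qed.

Lemma half_mate a : (mate a)./2 = a./2.
Proof. rewrite mateE; case: ifP; lia. Qed.

Lemma mateK : involutive mate.
Proof. move=> a; rewrite !mateE; repeat case: ifP; lia. Qed.

Lemma mate_neq a : mate a != a.
Proof. by rewrite mateE; case: ifP => /eqP ?; apply/eqP; lia. Qed.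

Section PiPerm.
Variable n : nat.

Lemma Aperm_val (k : 'I_n) (a : 'I_(2 * n)) :
  val (Aperm k a) = if a./2 == k then mate a else a.
Proof.
rewrite /Aperm permE /= mateE -!val_eqE /=.
by have := ltn_ord a; have := ltn_ord k; repeat case: ifP => /= ?; lia.
Qed.

Lemma prod_Aperm_val (r : seq 'I_n) (a : 'I_(2 * n)) : uniq r ->
  val ((\prod_(k <- r) Aperm k) a) =
    if a./2 \in [seq val k | k <- r] then mate a else a.
Proof.
elim: r a => [|k r IHr] a /=; first by rewrite big_nil perm1.
case/andP=> kr ur; rewrite big_cons permM inE IHr // Aperm_val.
have [ak|//] := eqVneq a./2 (val k).
by rewrite /= half_mate ak (mem_map val_inj) (negbTE kr).
Qed.

Lemma piperm_val (a : 'I_(2 * n)) : val (piperm n a) = mate a.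
Proof.
rewrite prod_Aperm_val ?index_enum_uniq //.
have a2_lt : a./2 < n by have := ltn_ord a; lia.
by rewrite (map_f val (mem_index_enum (Ordinal a2_lt))).
Qed.

Lemma piperm_invol : piperm n * piperm n = 1.
Proof. by apply/permP => a; apply: val_inj; rewrite permM perm1 !piperm_val mateK. Qed.

Lemma piperm_fpf (a : 'I_(2 * n)) : piperm n a != a.
Proof. by rewrite -val_eqE piperm_val mate_neq. Qed.

Lemma Aperm_cent (k : 'I_n) : Aperm k \in 'C[piperm n].
Proof.
apply/cent1P/permP => a; apply: val_inj.
by rewrite !permM piperm_val !Aperm_val piperm_val half_mate; case: ifP.
Qed.

Lemma piperm_swap (x : 'S_(2 * n)) :
    x \in piperm n ^: [set: 'S_(2 * n)] -> commute x (piperm n) ->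
  exists d, x ^ d = piperm n /\ piperm n ^ d = x.
Proof.
case/imsetP=> c _ -> {x} xc.
apply: commuting_fpf_involutions_swap.
- exact: piperm_invol.
- by rewrite -conjMg piperm_invol conj1g.
- exact: commute_sym.
- exact: piperm_fpf.
- by move=> a; rewrite -(permKV c a) permJ (inj_eq perm_inj) piperm_fpf.
Qed.

Lemma rho_piperm (rho : 'S_(2 * n) -> algC) :
    odd n -> one_dim_rep 'C[piperm n] rho ->
    (forall k : 'I_n, rho (Aperm k) = (-1)%R) -> rho (piperm n) = (-1)%R.
Proof.
move=> n_odd rho_rep rhoA; rewrite (one_dim_rep_prod rho_rep _ Aperm_cent).
by rewrite (eq_bigr _ (fun k _ => rhoA k)) prodr_const card_ord -signr_odd n_odd.
Qed.

End PiPerm.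

(* Neither n >= 2 nor the value [eps] of rho on the B_j is needed. *)
Theorem proposition2p4 (n : nat) (n_ge2 : 2 <= n) (n_odd : odd n)
    (eps : algC) (eps_val : eps = 1%R \/ eps = (-1)%R)
    (rho : 'S_(2 * n) -> algC)
    (rho_rep : one_dim_rep 'C[piperm n] rho)
    (rhoA : forall k : 'I_n, rho (Aperm k) = (-1)%R)
    (rhoB : forall k : 'I_n.-1, rho (Bperm k) = eps)
    (g : 'S_(2 * n) -> 'S_(2 * n))
    (g_ok : conj_choice (piperm n) g) :
  negative_braiding (piperm n) rho g.
Proof.
apply: negative_braiding_of_swap => //.
- exact: piperm_swap.
- exact: piperm_invol.
- exact: rho_piperm.
Qed.
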